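(* Let $\tau\in\{1,\dots,c\}$ with $\tau\le c/2$, and let $0<x_L<x_H<1$ with $x^*-x_L=x_H-x^*$. Consider the two-price policy with parameters $x_L,x_H,\tau$ and its steady-state distribution $\pi$, and set $\varsigma_L=\frac{1}{\pi_0}\sum_{j=1}^\tau\pi_j$, $\varsigma_H=\frac1{\pi_0}\sum_{j=\tau+1}^c\pi_j$. Then $$\varsigma_L\ge\Big(1-\frac{\tau^2}{2c}\Big)\frac{(x^*/x_L)^\tau-1}{1-x_L/x^*},\qquad \varsigma_L-\varsigma_H\le\frac{(x^*/x_L)^\tau}{1-x_L/x^*}\Big(\frac{2\tau^2}{c}+(x^*/x_H)^\tau\Big).$$
   Context: Setting. Fix $c\in\mathbb N$ (number of identical units of a single reusable resource), an arrival rate $\lambda>0$ and a mean usage duration $d>0$, with $x^*:=c/(\lambda d)\in(0,1)$. A stock-dependent policy is a vector $\mathbf x=(x_1,\dots,x_c)\in[0,1]^c$, where $x_j$ is the admission probability used when exactly $j$ units are available. Its steady-state distribution is the unique probability vector $\pi=(\pi_0,\dots,\pi_c)$ satisfying $\pi_j\lambda x_j=\pi_{j-1}(c-j+1)/d$ for all $j\in\{1,\dots,c\}$. A two-price policy with parameters $x_L,x_H\in[0,1]$ and $\tau\in\{1,\dots,c\}$ sets $x_j=x_L$ for $1\le j\le\tau$ and $x_j=x_H$ for $\tau<j\le c$. *)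

From HB Require Import structures.
From mathcomp Require Import all_boot all_order all_algebra.
Set Implicit Arguments. Unset Strict Implicit. Unset Printing Implicit Defensive.
Import Order.TTheory GRing.Theory Num.Theory.
Local Open Scope ring_scope.

Definition xstar {R : realFieldType} (c : nat) (lam d : R) : R := c%:R / (lam * d).

(* two-price policy: x_j = x_L for 1 <= j <= tau, x_j = x_H for tau < j <= c
   (the value at j = 0 is irrelevant and never used) *)
Definition two_price {R : realFieldType} (xL xH : R) (tau : nat) (j : nat) : R :=
  if (j <= tau)%N then xL else xH.

(* pi (indexed by 0..c) is the steady-state distribution of the stock-dependent
   policy x: a probability vector satisfying the balance equations
   pi_j * lambda * x_j = pi_{j-1} * (c - j + 1) / d  for 1 <= j <= c. *)
Definition steady_state {R : realFieldType} (c : nat) (lam d : R)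
    (x : nat -> R) (pi : nat -> R) : Prop :=
  (forall j, (j <= c)%N -> 0 <= pi j) /\
  \sum_(0 <= j < c.+1) pi j = 1 /\
  (forall j, (1 <= j <= c)%N ->
     pi j * lam * x j = pi j.-1 * (c.+1 - j)%:R / d).

From HB Require Import structures.
From mathcomp Require Import all_boot all_order all_algebra ring lra.

(* The balance equations give pi_j = pi_0 * prod_(i <= j) (x*/x_i) * prod_(i < j) (1 - i/c).
   For the two-price policy the first product is (x*/x_L)^j for j <= tau and
   (x*/x_L)^tau (x*/x_H)^(j - tau) beyond, while by the Weierstrass product inequality the
   second lies in [1 - j^2/(2c), 1].  Hence varsigma_L is squeezed between (1 - tau^2/(2c))
   and 1 times the geometric sum of (x*/x_L)^j, j = 1..tau, and, keeping only the terms
   j <= 2 tau <= c, varsigma_H is at least (1 - 2 tau^2/c) (x*/x_L)^tau times the geometric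
   sum of (x*/x_H)^k, k = 1..tau.  The symmetry x* - x_L = x_H - x* gives both geometric
   sums the denominator 1 - x_L/x*, and the bounds follow by algebra. *)

Set Implicit Arguments.
Unset Strict Implicit.
Unset Printing Implicit Defensive.

Import Order.TTheory GRing.Theory Num.Theory.
Local Open Scope ring_scope.

Lemma weierstrass_product_ineq (R : realDomainType) (I : Type) (r : seq I)
    (P : pred I) (u : I -> R) :
  (forall i, P i -> 0 <= u i <= 1) ->
  1 - \sum_(i <- r | P i) u i <= \prod_(i <- r | P i) (1 - u i).
Proof.
move=> u01; elim: r => [|y r IH]; first by rewrite !big_nil subr0.
rewrite !big_cons; case: ifP => // Py.
have /andP[uy0 uy1] := u01 y Py.
have S0 : 0 <= \sum_(i <- r | P i) u i by apply: sumr_ge0 => i /u01/andP[].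
nra.
Qed.

Lemma sumr_nat_le_sqr (R : realDomainType) (n : nat) :
  2 * \sum_(0 <= i < n) i%:R <= n%:R ^+ 2 :> R.
Proof.
elim: n => [|n IH]; first by rewrite big_geq // mulr0 expr0n.
rewrite big_nat_recr //= -natr1; nra.
Qed.

Lemma geometric_sum (R : fieldType) (a : R) (n : nat) : a != 0 ->
  (\sum_(1 <= j < n.+1) a ^+ j) * (1 - a^-1) = a ^+ n - 1.
Proof.
move=> a0; elim: n => [|n IH]; first by rewrite big_geq // mul0r expr0 subrr.
by rewrite big_nat_recr //= mulrDl IH exprS; field.
Qed.

Lemma geometric_sum_div (R : fieldType) (x y : R) (n : nat) :
  x != 0 -> y != 0 -> y != x ->
  \sum_(1 <= j < n.+1) (x / y) ^+ j = ((x / y) ^+ n - 1) / (1 - y / x).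
Proof.
move=> x0 y0 yx; rewrite -geometric_sum ?mulf_neq0 ?invr_neq0 // invf_div mulfK //.
rewrite subr_eq0 eq_sym; apply: contra yx => /eqP yx1.
by rewrite -(divfK x0 y) yx1 mul1r.
Qed.

Lemma two_price_gap_le (R : realFieldType) (sL sH A B D t : R) :
  0 < D -> 0 <= t -> 0 <= A * B ->
  sL <= (A - 1) / D -> (1 - t) * A * ((1 - B) / D) <= sH ->
  sL - sH <= A / D * (t + B).
Proof.
move=> D_gt0 t_ge0 AB_ge0 sL_le sH_ge.
have gap : A / D * (t + B) - ((A - 1) / D - (1 - t) * A * ((1 - B) / D)) =
    (1 + t * (A * B)) / D by field; rewrite gt_eqF.
have : 0 <= (1 + t * (A * B)) / D.
  by rewrite divr_ge0 ?(ltW D_gt0) // addr_ge0 // mulr_ge0.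
lra.
Qed.

Definition falling_ratio {R : realFieldType} (c n : nat) : R :=
  \prod_(0 <= i < n) (1 - i%:R / c%:R).

Section FallingRatio.
Variables (R : realFieldType) (c n : nat).
Hypothesis n_le_c : (n <= c)%N.

Let ratio01 (i : nat) : (i < n)%N -> 0 <= (i%:R / c%:R : R) <= 1.
Proof.
move=> i_lt_n; have i_lt_c := leq_trans i_lt_n n_le_c.
rewrite divr_ge0 ?ler0n //= ler_pdivrMr ?mul1r ?ler_nat ?ltr0n ?(ltnW i_lt_c) //.
exact: leq_ltn_trans i_lt_c.
Qed.

Lemma falling_ratio_ge0 : 0 <= falling_ratio c n :> R.
Proof.
rewrite /falling_ratio big_nat prodr_ge0 // => i /andP[_ /ratio01/andP[_]].
by rewrite subr_ge0.
Qed.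

Lemma falling_ratio_le1 : falling_ratio c n <= 1 :> R.
Proof.
rewrite /falling_ratio big_nat prodr_ile1 // => i /andP[_ /ratio01/andP[u0 u1]].
by rewrite subr_ge0 u1 lerBlDr lerDl.
Qed.

Lemma falling_ratio_ge m : (n <= m)%N ->
  1 - m%:R ^+ 2 / (2 * c%:R) <= falling_ratio c n :> R.
Proof.
move=> n_le_m; move: n_le_c; have [->|c_gt0 _] := posnP c.
  by rewrite leqn0 => /eqP->; rewrite /falling_ratio big_geq // mulr0 invr0 mulr0 subr0.
have c0 : 0 < c%:R :> R by rewrite ltr0n.
have weierstrass : 1 - \sum_(0 <= i < n) i%:R / c%:R <= falling_ratio c n :> R.
  by rewrite /falling_ratio !big_nat; apply: weierstrass_product_ineq => i /andP[_ /ratio01].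
apply: le_trans weierstrass; rewrite lerD2l lerN2 -mulr_suml.
rewrite invfM mulrA ler_pM2r ?invr_gt0 // ler_pdivlMr // mulrC.
apply: le_trans (sumr_nat_le_sqr _ _) _.
by apply: lerXn2r; rewrite ?nnegrE ?ler0n ?ler_nat.
Qed.

End FallingRatio.

Definition policy_weight {R : realFieldType} (xs : R) (x : nat -> R) (j : nat) : R :=
  \prod_(1 <= i < j.+1) (xs / x i).

Lemma policy_weightS (R : realFieldType) (xs : R) (x : nat -> R) (j : nat) :
  policy_weight xs x j.+1 = policy_weight xs x j * (xs / x j.+1).
Proof. by rewrite /policy_weight big_nat_recr. Qed.

Lemma falling_ratioS (R : realFieldType) (c j : nat) :
  falling_ratio c j.+1 = falling_ratio c j * (1 - j%:R / c%:R) :> R.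
Proof. by rewrite /falling_ratio big_nat_recr. Qed.

Section SteadyState.
Variables (R : realFieldType) (c : nat) (lam d : R) (x pi : nat -> R).
Hypotheses (lam_gt0 : 0 < lam) (d_gt0 : 0 < d) (c_gt0 : (0 < c)%N).
Hypothesis x_gt0 : forall j, (1 <= j <= c)%N -> 0 < x j.
Hypothesis pi_ss : steady_state c lam d x pi.

Lemma steady_state_closed_form j : (j <= c)%N ->
  pi j = pi 0%N * policy_weight (xstar c lam d) x j * falling_ratio c j.
Proof.
have [_ [_ balance]] := pi_ss.
elim: j => [|j IH] j_lt_c.
  by rewrite /policy_weight /falling_ratio big_geq // big_geq // !mulr1.
have xj0 : 0 < x j.+1 by rewrite x_gt0.
have := balance j.+1; rewrite j_lt_c => /(_ isT) /= E.
have -> : pi j.+1 = pi j.+1 * lam * x j.+1 / (lam * x j.+1).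
  by field; rewrite !gt_eqF.
rewrite E IH ?(ltnW j_lt_c) // policy_weightS falling_ratioS.
rewrite subSS natrB ?(ltnW j_lt_c) // /xstar; field.
by rewrite pnatr_eq0 -lt0n c_gt0 !gt_eqF.
Qed.

Lemma steady_state_sum m n : (n <= c.+1)%N ->
  \sum_(m <= j < n) pi j =
  pi 0%N * \sum_(m <= j < n) policy_weight (xstar c lam d) x j * falling_ratio c j.
Proof.
move=> n_le; rewrite mulr_sumr; apply: eq_big_nat => j /andP[_ j_lt_n].
by rewrite mulrA steady_state_closed_form // -ltnS (leq_trans j_lt_n).
Qed.

Lemma steady_state_pi0_neq0 : pi 0%N != 0.
Proof.
have [_ [total _]] := pi_ss; apply: contra_eq_neq total => pi00.
by rewrite steady_state_sum // pi00 mul0r eq_sym oner_neq0.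
Qed.

Lemma steady_state_sum_ratio m n : (n <= c.+1)%N ->
  (\sum_(m <= j < n) pi j) / pi 0%N =
  \sum_(m <= j < n) policy_weight (xstar c lam d) x j * falling_ratio c j.
Proof.
by move=> n_le; rewrite steady_state_sum // mulrC mulKf ?steady_state_pi0_neq0.
Qed.

End SteadyState.

Section TwoPriceWeight.
Variables (R : realFieldType) (xs xL xH : R) (tau : nat).

Lemma two_price_weight_low j : (j <= tau)%N ->
  policy_weight xs (two_price xL xH tau) j = (xs / xL) ^+ j.
Proof.
elim: j => [|j IH] j_le; first by rewrite /policy_weight big_geq.
by rewrite policy_weightS IH ?(ltnW j_le) // /two_price j_le exprSr.
Qed.

Lemma two_price_weight_high k :
  policy_weight xs (two_price xL xH tau) (k + tau) =
  (xs / xL) ^+ tau * (xs / xH) ^+ k.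
Proof.
elim: k => [|k IH]; first by rewrite add0n two_price_weight_low // mulr1.
rewrite addSn policy_weightS IH /two_price leqNgt ltnS leq_addl /= exprSr.
by rewrite -mulrA.
Qed.

End TwoPriceWeight.

Section TwoPriceSums.
Variables (R : realFieldType) (c tau : nat) (xs xL xH : R).
Hypotheses (xs_gt0 : 0 < xs) (xL_gt0 : 0 < xL) (xH_gt0 : 0 < xH).
Hypothesis tau_le_c : (tau <= c)%N.

Let a := xs / xL.
Let b := xs / xH.
Let W j := policy_weight xs (two_price xL xH tau) j * falling_ratio c j.

Let a_ge0 : 0 <= a. Proof. by rewrite divr_ge0 // ltW. Qed.
Let b_ge0 : 0 <= b. Proof. by rewrite divr_ge0 // ltW. Qed.

Lemma two_price_low_sum_ge :
  (1 - tau%:R ^+ 2 / (2 * c%:R)) * \sum_(1 <= j < tau.+1) a ^+ j <=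
  \sum_(1 <= j < tau.+1) W j.
Proof.
rewrite mulr_sumr; apply: ler_sum_nat => j /andP[_]; rewrite ltnS => j_le_tau.
rewrite /W two_price_weight_low // mulrC ler_wpM2l ?exprn_ge0 //.
exact: (falling_ratio_ge _ (leq_trans j_le_tau tau_le_c) j_le_tau).
Qed.

Lemma two_price_low_sum_le :
  \sum_(1 <= j < tau.+1) W j <= \sum_(1 <= j < tau.+1) a ^+ j.
Proof.
apply: ler_sum_nat => j /andP[_]; rewrite ltnS => j_le_tau.
have j_le_c := leq_trans j_le_tau tau_le_c.
rewrite /W two_price_weight_low // ler_piMr ?exprn_ge0 //.
exact: (falling_ratio_le1 _ j_le_c).
Qed.

Lemma two_price_high_sum_ge : (tau.*2 <= c)%N ->
  (1 - 2 * tau%:R ^+ 2 / c%:R) * a ^+ tau * \sum_(1 <= j < tau.+1) b ^+ j <=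
  \sum_(tau.+1 <= j < c.+1) W j.
Proof.
move=> tau2_le_c.
have W_ge0 j : (j <= c)%N -> 0 <= W j.
  move=> j_le_c; rewrite mulr_ge0 ?(falling_ratio_ge0 _ j_le_c) // /policy_weight.
  rewrite prodr_ge0 // => i _; rewrite divr_ge0 ?(ltW xs_gt0) // /two_price.
  by case: ifP => _; apply: ltW.
rewrite [X in _ <= X](@big_cat_nat _ _ _ tau.*2.+1) /=; last 2 first.
- by rewrite ltnS -addnn leq_addr.
- by rewrite ltnS.
apply: ler_wpDr.
  by rewrite big_nat_cond sumr_ge0 // => j /andP[/andP[_]]; rewrite ltnS => /W_ge0.
rewrite -addnn -{2}(add1n tau) big_addn -addSn addnK mulr_sumr.
apply: ler_sum_nat => i /andP[_]; rewrite ltnS => i_le_tau.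
have i_tau_le : (i + tau <= tau + tau)%N by rewrite leq_add2r.
rewrite /W two_price_weight_high -/a -/b -mulrA mulrC.
rewrite ler_wpM2l ?mulr_ge0 ?exprn_ge0 //.
have -> : 2 * tau%:R ^+ 2 / c%:R = (tau + tau)%:R ^+ 2 / (2 * c%:R) :> R.
  have [c0|c_gt0] := posnP c; first by rewrite c0 !mulr0 !invr0 !mulr0.
  by rewrite natrD; field; rewrite pnatr_eq0 -lt0n.
apply: (falling_ratio_ge _ _ i_tau_le).
by rewrite (leq_trans i_tau_le) // addnn.
Qed.

End TwoPriceSums.

Theorem lemma2 (R : realFieldType) (c : nat) (lam d xL xH : R) (tau : nat)
    (pi : nat -> R) :
  0 < lam -> 0 < d ->
  0 < xstar c lam d -> xstar c lam d < 1 ->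
  (1 <= tau)%N -> (tau <= c)%N -> (tau%:R <= c%:R / 2 :> R) ->
  0 < xL -> xL < xH -> xH < 1 ->
  xstar c lam d - xL = xH - xstar c lam d ->
  steady_state c lam d (two_price xL xH tau) pi ->
  let xs := xstar c lam d in
  let sL := (\sum_(1 <= j < tau.+1) pi j) / pi 0%N in
  let sH := (\sum_(tau.+1 <= j < c.+1) pi j) / pi 0%N in
  (1 - tau%:R ^+ 2 / (2 * c%:R)) * (((xs / xL) ^+ tau - 1) / (1 - xL / xs)) <= sL /\
  sL - sH <= (xs / xL) ^+ tau / (1 - xL / xs) *
             (2 * tau%:R ^+ 2 / c%:R + (xs / xH) ^+ tau).
Proof.
move=> lam_gt0 d_gt0 xs_gt0 _ tau_ge1 tau_le_c tau_le_half xL_gt0 xL_lt_xH _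
  symmetric pi_ss xs sL sH.
have c_gt0 : (0 < c)%N := leq_trans tau_ge1 tau_le_c.
have tau2_le_c : (tau.*2 <= c)%N.
  by rewrite -(ler_nat R) -muln2 natrM -ler_pdivlMr.
have xH_gt0 : 0 < xH := lt_trans xL_gt0 xL_lt_xH.
have x_gt0 j : (1 <= j <= c)%N -> 0 < two_price xL xH tau j.
  by rewrite /two_price; case: ifP.
rewrite /sL /sH !(steady_state_sum_ratio lam_gt0 d_gt0 c_gt0 x_gt0 pi_ss) //.
have [xL_lt_xs xs_lt_xH] : xL < xs /\ xs < xH by rewrite /xs; lra.
have D_gt0 : 0 < 1 - xL / xs by rewrite subr_gt0 ltr_pdivrMr // mul1r.
have xs_neq0 := lt0r_neq0 xs_gt0.
have xL_neq0 := lt0r_neq0 xL_gt0.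
have xH_neq0 := lt0r_neq0 xH_gt0.
have DH : 1 - xH / xs = - (1 - xL / xs).
  by rewrite opprB; apply: (mulIf xs_neq0); rewrite !mulrBl !divfK // /xs; lra.
split.
  by rewrite -geometric_sum_div ?(lt_eqF xL_lt_xs) //; exact: two_price_low_sum_ge.
apply: two_price_gap_le.
- exact: D_gt0.
- by rewrite divr_ge0 ?mulr_ge0 ?ler0n ?sqr_ge0.
- by rewrite mulr_ge0 // exprn_ge0 // divr_ge0 // ltW.
- have := two_price_low_sum_le xH xs_gt0 xL_gt0 tau_le_c.
  by rewrite geometric_sum_div ?(lt_eqF xL_lt_xs).
- have := two_price_high_sum_ge xs_gt0 xL_gt0 xH_gt0 tau2_le_c.
  by rewrite geometric_sum_div ?(gt_eqF xs_lt_xH) // DH invrN mulrN -mulNr opprB.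
Qed.
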